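(* Let $N\ge 2$ and let $p,p'$ be two paths of length $N$. Then $p$ and $p'$ produce identical shapes if and only if their edge matrices are identical.
   Context: A path of length $N$ is a vector $p=(p_0,\dots,p_{N-1})$ whose entries are the integers $0,\dots,N-1$ in some order; indices are cyclic, $p_N=p_0$, $s_{-1}=s_{N-1}$. Nodes $0,\dots,N-1$ are placed at equally spaced points clockwise around a circle; the shape of $p$ is the set of chords (unordered node pairs) $\{p_n,p_{n+1}\}$, $n=0,\dots,N-1$. The path differences are $d_n=p_{n+1}-p_n$, and the steps are $s_n=d_n$ if $|d_n|<N/2$; $s_n=N/2$ if $|d_n|=N/2$; $s_n=d_n-N$ if $d_n>N/2$; $s_n=d_n+N$ if $d_n<-N/2$. The edge matrix $E=(e_{in})\in\mathbb{Z}^{2\times N}$ of $p$ is defined column by column: for node $n\in\{0,\dots,N-1\}$ let $k$ be the index with $p_k=n$; take the two integers $s_k$ and $-s_{k-1}$, replace each of them by $0$ if its absolute value equals $N/2$, and let $e_{1n}\le e_{2n}$ be these two integers sorted in nondecreasing order. *)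

From HB Require Import structures.
From mathcomp Require Import all_boot all_order all_algebra all_fingroup.
Set Implicit Arguments. Unset Strict Implicit. Unset Printing Implicit Defensive.
Import Order.TTheory GRing.Theory Num.Theory.
Local Open Scope ring_scope.

(* A path of length N is a permutation p of {0,..,N-1}: p_n = p n.
   Cyclic indices: p_{n+1} = p (ordS n), s_{n-1} = s (ord_pred n). *)

Definition path_shape (N : nat) (p : {perm 'I_N}) : {set {set 'I_N}} :=
  [set [set p k; p (ordS k)] | k : 'I_N].

Definition pdiff (N : nat) (p : {perm 'I_N}) (k : 'I_N) : int :=
  (nat_of_ord (p (ordS k)))%:Z - (nat_of_ord (p k))%:Z.

Definition step_of (N : nat) (d : int) : int :=
  if (2 * `|d| < N%:Z) then d
  else if (2 * `|d| == N%:Z) then (N./2)%:Z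
  else if (2 * d > N%:Z) then d - N%:Z
  else d + N%:Z.

Definition step (N : nat) (p : {perm 'I_N}) (k : 'I_N) : int :=
  step_of N (pdiff p k).

Definition zero_half (N : nat) (x : int) : int :=
  if 2 * `|x| == N%:Z then 0 else x.

Definition edge_matrix (N : nat) (p : {perm 'I_N}) : 'M[int]_(2, N) :=
  \matrix_(i < 2, n < N)
    let k := (p^-1)%g n in
    let a := zero_half N (step p k) in
    let b := zero_half N (- step p (ord_pred k)) in
    if i == 0 then Num.min a b else Num.max a b.

From HB Require Import structures.
From mathcomp Require Import all_boot all_order all_algebra all_fingroup.
From mathcomp Require Import zify.
Import Order.TTheory GRing.Theory Num.Theory.

Set Implicit Arguments.
Unset Strict Implicit.
Unset Printing Implicit Defensive.

Local Open Scope ring_scope.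

(* Both sides are equivalent to equality of the neighbour sets
   {p_{k+1}, p_{k-1}} of every node n = p_k.  A chord {n, m} belongs to the
   shape exactly when m is a neighbour of n.  Column n of the edge matrix is
   the sorted pair of the offsets of the two neighbours of n as seen from n,
   and the offset is injective on the nodes other than n, so the unordered
   pair of offsets determines the neighbours. *)

Lemma set2_eq (T : finType) (a b a' b' : T) :
  [set a; b] = [set a'; b'] -> (a = a' /\ b = b') \/ (a = b' /\ b = a').
Proof.
move=> E.
have /set2P[] : a \in [set a'; b'] by rewrite -E set21.
all: have /set2P[] : b \in [set a'; b'] by rewrite -E set22.
all: have /set2P[] : a' \in [set a; b] by rewrite E set21.
all: have /set2P[] : b' \in [set a; b] by rewrite E set22.
all: by move=> *; subst; auto.
Qed.

Lemma min_max_eq d (T : orderType d) (x y x' y' : T) :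
  Order.min x y = Order.min x' y' -> Order.max x y = Order.max x' y' ->
  (x = x' /\ y = y') \/ (x = y' /\ y = x').
Proof. by case: (leP x y) => _; case: (leP x' y') => _ -> ->; auto. Qed.

Lemma ordS_neq N (k : 'I_N) : (1 < N)%N -> ordS k != k.
Proof.
move=> N_gt1; apply/eqP => /(congr1 val) /=.
have := ltn_ord k; case: (ltngtP k.+1 N) => [lt_kN _ | // | eq_kN _].
- by rewrite modn_small //; lia.
- by rewrite eq_kN modnn; lia.
Qed.

Lemma ord_pred_neq N (k : 'I_N) : (1 < N)%N -> ord_pred k != k.
Proof. by move/(ordS_neq (ord_pred k)); rewrite ord_predK eq_sym. Qed.

Definition neighbours N (p : {perm 'I_N}) (n : 'I_N) : {set 'I_N} :=
  [set p (ordS ((p^-1)%g n)); p (ord_pred ((p^-1)%g n))].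

Lemma neighbours_perm N (p : {perm 'I_N}) (k : 'I_N) :
  neighbours p (p k) = [set p (ordS k); p (ord_pred k)].
Proof. by rewrite /neighbours permK. Qed.

Lemma mem_neighbours N (p : {perm 'I_N}) (n m : 'I_N) :
  (m \in neighbours p n) = ([set n; m] \in path_shape p).
Proof.
rewrite -(permKV p n) neighbours_perm; move: ((p^-1)%g n) => k.
apply/set2P/imsetP => [[->|->] | [j _ /set2_eq[[/perm_inj <- ->] | []]]].
- by exists k.
- by exists (ord_pred k); rewrite // ord_predK setUC.
- by left.
- by move=> /perm_inj -> ->; right; rewrite ordSK.
Qed.

Lemma neighbours_neq N (p : {perm 'I_N}) (n m : 'I_N) :
  (1 < N)%N -> m \in neighbours p n -> m != n.
Proof.
move=> N_gt1; rewrite -(permKV p n) neighbours_perm.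
by case/set2P=> ->; rewrite (inj_eq perm_inj) ?ordS_neq ?ord_pred_neq.
Qed.

Lemma path_shape_eqE N (p p' : {perm 'I_N}) :
  path_shape p = path_shape p' <-> forall n, neighbours p n = neighbours p' n.
Proof.
split=> [E n | E]; first by apply/setP => m; rewrite !mem_neighbours E.
suff shape_sub (q q' : {perm 'I_N}) : (forall n, neighbours q n = neighbours q' n) ->
    path_shape q \subset path_shape q'.
  by apply/eqP; rewrite eqEsubset !shape_sub // => n; rewrite E.
move=> Eq; apply/subsetP => _ /imsetP[k _ ->].
by rewrite -mem_neighbours -Eq mem_neighbours; apply: imset_f.
Qed.

Lemma zero_half_step_ofN N (d : int) :
  zero_half N (- step_of N d) = zero_half N (step_of N (- d)).
Proof. by rewrite /zero_half /step_of -divn2 normrN; repeat case: ifP; lia. Qed.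

Definition offset N (n m : 'I_N) : int := zero_half N (step_of N (m%:Z - n%:Z)).

(* [step_of N (m - n)] is the representative of [m - n] modulo [N] in
   [(-N/2, N/2]], and [zero_half] only identifies the antipode of [n] with [n]. *)
Lemma offset_inj N (n : 'I_N) : {in [pred m | m != n] &, injective (offset n)}.
Proof.
move=> m1 m2; rewrite !inE -!(inj_eq (@ord_inj N)) => m1_neq m2_neq.
rewrite /offset /zero_half /step_of -divn2 => E; apply: ord_inj.
have := ltn_ord m1; have := ltn_ord m2; have := ltn_ord n.
by move: m1_neq m2_neq E; repeat case: ifP; move=> *; lia.
Qed.

Lemma edge_matrixE N (p : {perm 'I_N}) (i : 'I_2) (n : 'I_N) :
  edge_matrix p i n = (if i == 0 then Order.min else Order.max)
    (offset n (p (ordS ((p^-1)%g n)))) (offset n (p (ord_pred ((p^-1)%g n)))).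
Proof.
rewrite mxE /= /step /pdiff /offset zero_half_step_ofN ord_predK permKV opprB.
by case: (i == 0).
Qed.

Lemma edge_matrix_eqE N (p p' : {perm 'I_N}) : (1 < N)%N ->
  edge_matrix p = edge_matrix p' <-> forall n, neighbours p n = neighbours p' n.
Proof.
move=> N_gt1; split=> [E n | E]; last first.
  apply/matrixP => i n; rewrite !edge_matrixE.
  case: (set2_eq (E n)) => [[-> ->] | [-> ->]] //.
  by case: (i == 0); [exact: minC | exact: maxC].
have neq_n q x : x \in neighbours q n -> x \in [pred m | m != n].
  exact: neighbours_neq.
have a1 := neq_n p _ (set21 _ _); have b1 := neq_n p _ (set22 _ _).
have a2 := neq_n p' _ (set21 _ _); have b2 := neq_n p' _ (set22 _ _).
have col_eq i : edge_matrix p i n = edge_matrix p' i n by rewrite E.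
move: (col_eq 0) (col_eq 1); rewrite !edge_matrixE /= => min_eq max_eq.
rewrite /neighbours; case: (min_max_eq min_eq max_eq) => [[] | []].
- by move=> /(offset_inj a1 a2) -> /(offset_inj b1 b2) ->.
- by move=> /(offset_inj a1 b2) -> /(offset_inj b1 a2) ->; apply: setUC.
Qed.

Theorem mainTheorem4 (N : nat) (hN : (2 <= N)%N) (p p' : {perm 'I_N}) :
  path_shape p = path_shape p' <-> edge_matrix p = edge_matrix p'.
Proof. by rewrite path_shape_eqE edge_matrix_eqE. Qed.
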